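(* Let $\Omega=\{0,1\}^{\mathbb{N}}$ with canonical process $X=(X_t)_{t\in\mathbb{N}}$, natural filtration $\mathcal{F}_t=\sigma(X_s,s\le t)$ ($\mathcal{F}_0$ trivial), $\mathcal{F}=\sigma(\bigcup_t\mathcal{F}_t)$. Define probability measures $\mathbb{P}_1,\mathbb{P}_2$ on $\mathcal{F}$ by: $\mathbb{P}_i(X_1=1)=1/2$ for $i=1,2$; conditionally on $X_1$, the variables $X_2,X_3,\dots$ are independent under both measures with, for $t\ge2$, $\mathbb{P}_1(X_t=1\mid X_1=1)=\mathbb{P}_2(X_t=1\mid X_1=0)=1/2$ and $\mathbb{P}_1(X_t=1\mid X_1=0)=\mathbb{P}_2(X_t=1\mid X_1=1)=2^{-t}$. Let $\mathcal{P}=\{\mathbb{P}_1,\mathbb{P}_2\}$ and $A=\{X_t=1\text{ for infinitely many }t\in\mathbb{N}\}$. Then $\mu^*(A)=1/2$, and there is no $\mathcal{P}$-e-process $(E_t)_{t\in\mathbb{N}_0}$ satisfying $\sup_{t\in\mathbb{N}_0}E_t\ge 1/\mu^*(A)=2$ at every point of $A$. More precisely, if $(E_t)$ is a $\mathcal{P}$-e-process and $c\in[1,\infty)$ is such that $\sup_tE_t\ge c$ on $A$, then $c<2$.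
   Context: Stopping times are with respect to the filtration above (values in $\mathbb{N}_0\cup\{\infty\}$), $\mathcal{T}$ is the set of all stopping times. Inverse-capital measure: $\mu^*(B) = \inf_{\tau\in\mathcal{T}:\, B\subseteq\{\tau<\infty\}} \sup_{\mathbb{P}\in\mathcal{P}} \mathbb{P}(\tau<\infty)$ for $B\subseteq\Omega$. A $\mathcal{P}$-e-process is a nonnegative (possibly $[0,\infty]$-valued) process $(E_t)_{t\in\mathbb{N}_0}$ adapted to $(\mathcal{F}_t)$ such that $\mathbb{E}_{\mathbb{P}}[E_\tau]\le 1$ for every $\mathbb{P}\in\mathcal{P}$ and every $\tau\in\mathcal{T}$, with the convention $E_\infty=\limsup_{t\to\infty}E_t$. *)

From HB Require Import structures.
From mathcomp Require Import all_boot all_order all_algebra.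
From mathcomp Require Import all_classical all_reals all_analysis measurable_realfun.
Set Implicit Arguments. Unset Strict Implicit. Unset Printing Implicit Defensive.
Import Order.TTheory GRing.Theory Num.Theory.
Local Open Scope classical_set_scope.
Local Open Scope ring_scope.

(* Sample space Omega = {0,1}^N, N = {1,2,...}: a point is x : nat -> bool and
   the canonical process is X_t x := x (t-1), for t >= 1. *)
Definition Omega0 := nat -> bool.
Definition X (t : nat) (x : Omega0) : bool := x t.-1.

Definition gen_upto (t : nat) : set (set Omega0) :=
  [set A | exists s b, (1 <= s <= t)%N /\ A = X s @^-1` [set b]].
Definition gen_all : set (set Omega0) :=
  [set A | exists s b, (1 <= s)%N /\ A = X s @^-1` [set b]].

Definition Ftime (t : nat) : set (set Omega0) := <<s gen_upto t >>.

Definition Omega := g_sigma_algebraType gen_all.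

(* stopping times with values in N_0 U {oo}; None stands for oo *)
Definition stopping_time (tau : Omega -> option nat) : Prop :=
  forall t : nat, Ftime t [set x | exists s, tau x = Some s /\ (s <= t)%N].

Definition finite_at (tau : Omega -> option nat) : set Omega :=
  [set x | tau x <> None].

Definition stopped {R : realType} (E : nat -> Omega -> \bar R)
    (tau : Omega -> option nat) (x : Omega) : \bar R :=
  match tau x with
  | Some t => E t x
  | None => limn_esup (fun t => E t x)
  end.

Section Defs.
Context {R : realType}.
Local Open Scope ereal_scope.

Definition mu_star (Pfam : set (probability Omega R)) (B : set Omega) : \bar R :=
  ereal_inf [set r | exists tau, stopping_time tau /\
     B `<=` finite_at tau /\
     r = ereal_sup [set y | exists2 P, Pfam P & y = P (finite_at tau)]].

Definition e_process (Pfam : set (probability Omega R))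
    (E : nat -> Omega -> \bar R) : Prop :=
  [/\ (forall t x, 0 <= E t x),
      (forall t (B : set (\bar R)), measurable B -> Ftime t (E t @^-1` B)) &
      (forall P, Pfam P -> forall tau, stopping_time tau ->
          \int[P]_x stopped E tau x <= 1)].
End Defs.

Definition cyl (n : nat) (b : nat -> bool) : set Omega :=
  [set x | forall t, (1 <= t <= n)%N -> X t x = b t].

(* Probability of a cylinder under the law: X_1 ~ Bernoulli(1/2), and given
   X_1 = b1 the X_t (t >= 2) are independent Bernoulli(q b1 t). *)
Definition cyl_prob {R : realType} (q : bool -> nat -> R) (n : nat)
    (b : nat -> bool) : R :=
  2^-1 * \prod_(2 <= t < n.+1) (if b t then q (b 1%N) t else 1 - q (b 1%N) t).

Definition q1 {R : realType} (b1 : bool) (t : nat) : R :=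
  if b1 then 2^-1 else 2 ^- t.
Definition q2 {R : realType} (b1 : bool) (t : nat) : R :=
  if b1 then 2 ^- t else 2^-1.

Definition Ainf : set Omega :=
  [set x | forall n, exists t, (n < t)%N /\ X t x = true].

(* Under [P1] and [P2] the first coordinate picks, with probability 1/2
   each, a fair branch, on which ones occur infinitely often almost surely,
   and a geometric branch, on which a one after time [n] has probability at
   most [2^-n]. Every stopping time that is finite on [A] is therefore finite
   with [P1]-probability at least 1/2, while the first one after time [n] is
   finite with probability at most [1/2 + 2^-n] under both measures; so
   [mu^*(A) = 1/2].

   Let [E] be an e-process with [sup_t E_t >= c >= 2] on [A]. The path [x]
   that leaves the fair branch of [P1] and then only shows ones lies in [A],
   so [E_t x > 1] for some [t >= 1], and [E_t] is constant on the cylinder [C]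
   of length [t] around [x], which has positive [P1]-probability. Stopping on
   the fair branch when [E] first reaches some [ce < c], and at time [t]
   elsewhere, gives [E_P1[E_tau] >= ce/2 + P1(C)], which exceeds 1 for [ce]
   close to [c]. *)

From HB Require Import structures.
From mathcomp Require Import all_boot all_order all_algebra.
From mathcomp Require Import all_classical all_reals all_analysis measurable_realfun.
From mathcomp Require Import ring lra.
Import Order.TTheory GRing.Theory Num.Theory.
Local Open Scope classical_set_scope.
Local Open Scope ring_scope.
Set Implicit Arguments. Unset Strict Implicit. Unset Printing Implicit Defensive.

(** * Filtration and stopping times *)

Lemma Ftime_measurable t (A : set Omega) : Ftime t A -> measurable A.
Proof.
apply: smallest_sub => //; first exact: smallest_sigma_algebra.
by move=> B [s [b [/andP[s1 _] ->]]]; apply: sub_sigma_algebra; exists s, b.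
Qed.

Lemma Ftime_mono s t (A : set Omega) : (s <= t)%N -> Ftime s A -> Ftime t A.
Proof.
move=> st; apply: sub_sigma_algebra2 => B [r [b [/andP[r1 rs] ->]]].
by exists r, b; rewrite r1 (leq_trans rs st).
Qed.

Lemma FtimeT t : Ftime t (setT : set Omega).
Proof. exact: (@measurableT _ (g_sigma_algebraType (gen_upto t))). Qed.

Lemma Ftime0 t : Ftime t (set0 : set Omega).
Proof. exact: (@measurable0 _ (g_sigma_algebraType (gen_upto t))). Qed.

Lemma FtimeC t (A : set Omega) : Ftime t A -> Ftime t (~` A).
Proof. exact: (@measurableC _ (g_sigma_algebraType (gen_upto t))). Qed.

Lemma FtimeI t (A B : set Omega) : Ftime t A -> Ftime t B -> Ftime t (A `&` B).
Proof. exact: (@measurableI _ (g_sigma_algebraType (gen_upto t))). Qed.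

Lemma FtimeU t (A B : set Omega) : Ftime t A -> Ftime t B -> Ftime t (A `|` B).
Proof. exact: (@measurableU _ (g_sigma_algebraType (gen_upto t))). Qed.

Lemma Ftime_bigcup t (I : set nat) (F : nat -> set Omega) :
  (forall i, I i -> Ftime t (F i)) -> Ftime t (\bigcup_(i in I) F i).
Proof. exact: (@bigcup_measurable _ (g_sigma_algebraType (gen_upto t))). Qed.

Lemma Ftime_guard t (b : bool) (A : set Omega) :
  (b -> Ftime t A) -> Ftime t [set x | b /\ A x].
Proof.
case: b => [/(_ isT)|_].
  by rewrite (_ : [set x | true /\ A x] = A) //; apply/seteqP; split=> [x []|x].
rewrite (_ : [set x | false /\ A x] = set0); first exact: Ftime0.
by apply/seteqP; split=> x // [].
Qed.

Lemma Ftime_X s t b : (1 <= s <= t)%N -> Ftime t (X s @^-1` [set b] : set Omega).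
Proof. by move=> st; apply: sub_sigma_algebra; exists s, b. Qed.

Lemma measurable_X s b : (1 <= s)%N -> measurable (X s @^-1` [set b] : set Omega).
Proof. by move=> s1; apply: (@Ftime_measurable s); apply: Ftime_X; rewrite s1 leqnn. Qed.

Definition agree_upto t (x y : Omega) := forall s, (1 <= s <= t)%N -> X s x = X s y.

(* The sets invariant under agreement up to time [t] form a sigma-algebra
   containing the generators of [Ftime t]. *)
Lemma Ftime_agree t (A : set Omega) x y : Ftime t A -> agree_upto t x y -> A x -> A y.
Proof.
pose G := [set B : set Omega | forall x y, agree_upto t x y -> B x -> B y].
have sG : sigma_algebra setT G.
  split.
  - by move=> ? ?.
  - move=> B GB u v uv [_ nBu]; split=> // Bv; apply: nBu; apply: (GB v u) => // s hs.
    by rewrite (uv s hs).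
  - by move=> F GF u v uv [n _ Fu]; exists n => //; exact: (GF n u v).
have : Ftime t `<=` G.
  apply: smallest_sub => // B [s [b [hs ->]]] u v uv /=; by rewrite (uv s hs).
by move=> /[apply]; apply.
Qed.

Lemma measurable_finite_at tau : stopping_time tau -> measurable (finite_at tau).
Proof.
move=> st.
have -> : finite_at tau = \bigcup_r [set x | exists s, tau x = Some s /\ (s <= r)%N].
  rewrite /finite_at; apply/seteqP; split => x /=; last by move=> [r _ [s [-> _]]].
  by case hx: (tau x) => [s|//] _; exists s => //; exists s.
by apply: bigcupT_measurable => r; exact: Ftime_measurable (st r).
Qed.

Lemma stopping_time_cst t : stopping_time (fun=> Some t).
Proof.
move=> s; case: (leqP t s) => ts.
  rewrite (_ : [set x | _] = setT); first exact: FtimeT.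
  by apply/seteqP; split=> // x _; exists t.
rewrite (_ : [set x | _] = set0); first exact: Ftime0.
by apply/seteqP; split=> // x [_ [[<-]]]; rewrite leqNgt ts.
Qed.

Lemma stopping_time_if k (A : pred Omega) sigma rho :
  Ftime k [set x | A x] -> stopping_time sigma -> stopping_time rho ->
  (forall x s, sigma x = Some s -> (k <= s)%N) ->
  (forall x s, rho x = Some s -> (k <= s)%N) ->
  stopping_time (fun x => if A x then sigma x else rho x).
Proof.
move=> FA st_sigma st_rho k_sigma k_rho s.
rewrite (_ : [set x | _] =
    ([set x | A x] `&` [set x | exists r, sigma x = Some r /\ (r <= s)%N]) `|`
    (~` [set x | A x] `&` [set x | exists r, rho x = Some r /\ (r <= s)%N])); last first.
  by apply/seteqP; split=> x /=; case: (A x) => /=; firstorder.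
case: (leqP k s) => ks.
  by apply: FtimeU; apply: FtimeI => //; apply: (Ftime_mono ks) => //; exact: FtimeC.
rewrite (_ : [set x | exists r, sigma x = Some r /\ _] = set0); last first.
  by apply/seteqP; split=> // x [r [/k_sigma kr rs]]; move: ks; rewrite ltnNge (leq_trans kr rs).
rewrite (_ : [set x | exists r, rho x = Some r /\ _] = set0); last first.
  by apply/seteqP; split=> // x [r [/k_rho kr rs]]; move: ks; rewrite ltnNge (leq_trans kr rs).
by rewrite !setI0 setU0; exact: Ftime0.
Qed.

Definition hitting (H : nat -> set Omega) (x : Omega) : option nat :=
  match pselect (exists r, `[< H r x >]) with
  | left h => Some (ex_minn h)
  | right _ => None
  end.

Lemma hittingP (H : nat -> set Omega) x : (exists r, H r x) ->
  exists2 m, hitting H x = Some m & H m x.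
Proof.
move=> [r Hr]; rewrite /hitting; case: pselect => [h|[]]; last by exists r; exact/asboolP.
by exists (ex_minn h) => //; case: ex_minnP => m /asboolP.
Qed.

Lemma hitting_Some (H : nat -> set Omega) x m : hitting H x = Some m -> H m x.
Proof.
by rewrite /hitting; case: pselect => // h [<-]; case: ex_minnP => m' /asboolP.
Qed.

Lemma finite_at_hitting (H : nat -> set Omega) :
  finite_at (hitting H) = \bigcup_r H r.
Proof.
rewrite /finite_at; apply/seteqP; split=> x /=.
  by case hx: (hitting H x) => [m|//] _; exists m => //; exact: hitting_Some hx.
by move=> [r _ Hr]; have [m -> _] := hittingP (ex_intro _ r Hr).
Qed.

Lemma stopping_time_hitting (H : nat -> set Omega) :
  (forall r, Ftime r (H r)) -> stopping_time (hitting H).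
Proof.
move=> FH t.
rewrite (_ : [set x | _] = \bigcup_(r in [set r | (r <= t)%N]) H r).
  by apply: Ftime_bigcup => r rt; exact: Ftime_mono rt (FH r).
apply/seteqP; split=> x /=.
  by move=> [m [/hitting_Some Hm mt]]; exists m.
move=> [r rt Hr]; rewrite /hitting; case: pselect => [h|[]]; last by exists r; exact/asboolP.
exists (ex_minn h); split=> //; case: ex_minnP => m _ /(_ r (asboolT Hr)) mr.
exact: leq_trans mr rt.
Qed.

(** * Cylinder probabilities *)

Definition gcyl n (J b : nat -> bool) : set Omega :=
  [set x | forall t, (1 <= t <= n)%N -> J t -> X t x = b t].

Lemma Ftime_gcyl n J b : Ftime n (gcyl n J b).
Proof.
elim: n => [|n IH].
  rewrite (_ : gcyl 0 J b = setT); first exact: FtimeT.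
  by apply/seteqP; split => // x _ t /andP[t1 t0]; move: (leq_trans t1 t0).
rewrite (_ : gcyl n.+1 J b = gcyl n J b `&`
    (if J n.+1 then X n.+1 @^-1` [set b n.+1] else setT)).
  apply: FtimeI; first exact: Ftime_mono (leqnSn n) IH.
  by case: (J n.+1); [apply: Ftime_X; rewrite leqnn|exact: FtimeT].
apply/seteqP; split => x /=.
  move=> h; split; first by move=> t /andP[t1 tn]; apply: h; rewrite t1 (leq_trans tn).
  by case Jn: (J n.+1) => //; apply: h; rewrite ?leqnn.
move=> [h1 h2] t /andP[t1]; rewrite leq_eqVlt => /orP[/eqP ->|tn] Jt.
  by move: h2; rewrite Jt.
by apply: h1 => //; rewrite t1 -ltnS.
Qed.

Lemma measurable_gcyl n J b : measurable (gcyl n J b).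
Proof. by apply: Ftime_measurable; exact: Ftime_gcyl. Qed.

Lemma gcyl_predT n b : gcyl n predT b = cyl n b.
Proof. by apply/seteqP; split=> x h t ht; [apply: h|move=> _; apply: h]. Qed.

Lemma gcyl_split n J b s : (1 <= s <= n)%N -> ~~ J s ->
  gcyl n J b = gcyl n (predU J (pred1 s)) [eta b with s |-> true] `|`
               gcyl n (predU J (pred1 s)) [eta b with s |-> false].
Proof.
move=> sn nJs; apply/seteqP; split => x.
  move=> h; case hx: (X s x); [left|right] => t ht /orP[Jt|/eqP ->] /=;
    rewrite ?eqxx //; case: eqVneq => [ts|_]; do ?exact: h;
    by move: nJs; rewrite -ts Jt.
move=> [] h t ht Jt; rewrite (h t ht) /= ?Jt //;
  by case: eqVneq => [ts|//]; move: nJs; rewrite -ts Jt.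
Qed.

Lemma gcyl_split_disj n J b s : (1 <= s <= n)%N ->
  gcyl n (predU J (pred1 s)) [eta b with s |-> true] `&`
  gcyl n (predU J (pred1 s)) [eta b with s |-> false] = set0.
Proof.
move=> sn; apply/seteqP; split => // x [h1 h2].
by move: (h1 s sn) (h2 s sn) => /=; rewrite eqxx orbT => /(_ isT) -> /(_ isT).
Qed.

Definition zeros_after (v : bool) n : set Omega :=
  [set x | X 1 x = v /\ forall t, (n < t)%N -> X t x = false].

Lemma measurable_zeros_after v n : measurable (zeros_after v n).
Proof.
have -> : zeros_after v n = X 1 @^-1` [set v] `&`
    \bigcap_t [set x | (n < t)%N -> X t x = false].
  apply/seteqP; split => x /= [h1 h2]; split=> //.
    by move=> t _; exact: h2.
  by move=> t; exact: h2 t I.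
apply: measurableI; first exact: measurable_X.
apply: bigcapT_measurable => t; case: ltnP => nt.
  rewrite (_ : [set x | true -> X t x = false] = X t @^-1` [set false]).
    by apply: measurable_X; exact: leq_trans (ltn0Sn n) nt.
  by apply/seteqP; split=> x /= h; [exact: h|move=> _].
rewrite (_ : [set x | false -> X t x = false] = setT) //.
by apply/seteqP; split=> // x _.
Qed.

Lemma count_predC_predU1 (J : pred nat) s l : ~~ J s ->
  count (predC J) l = (count (predC (predU J (pred1 s))) l + count (pred1 s) l)%N.
Proof.
move=> nJs; elim: l => //= x l ->.
case: (eqVneq x s) => [->|xs]; first by rewrite (negbTE nJs) /= addnS.
by rewrite orbF /= add0n addnA.
Qed.

Section cylinder_law.
Variables (R : realType) (q : bool -> nat -> R) (P : probability Omega R).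
Hypothesis hP : forall n b, (1 <= n)%N -> P (cyl n b) = (cyl_prob q n b)%:E.

Definition cyl_weight (b : nat -> bool) t : R :=
  if b t then q (b 1%N) t else 1 - q (b 1%N) t.

Lemma prod_cyl_weight_with n (J : pred nat) b s v : (2 <= s <= n)%N -> ~~ J s ->
  \prod_(2 <= t < n.+1 | predU J (pred1 s) t) cyl_weight [eta b with s |-> v] t =
  (if v then q (b 1%N) s else 1 - q (b 1%N) s) *
  \prod_(2 <= t < n.+1 | J t) cyl_weight b t.
Proof.
move=> /andP[s2 sn] nJs.
have s1 : (1%N == s) = false by apply/negbTE; rewrite neq_ltn (leq_trans _ s2).
rewrite big_mkcond (bigD1_seq s) ?mem_index_iota ?s2 ?iota_uniq //=.
rewrite [in RHS]big_mkcond (bigD1_seq s) ?mem_index_iota ?s2 ?iota_uniq //=.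
rewrite eqxx orbT (negbTE nJs) mul1r /cyl_weight /= eqxx s1; congr (_ * _).
by apply: eq_bigr => t /negbTE ts; rewrite ts orbF.
Qed.

(* Induction on the number of coordinates in [2, n] left free by [J]: freeing
   one more coordinate splits the generalized cylinder into two. *)
Lemma prob_gcyl n (J : pred nat) b : (1 <= n)%N -> J 1%N ->
  P (gcyl n J b) = (2^-1 * \prod_(2 <= t < n.+1 | J t) cyl_weight b t)%:E.
Proof.
move=> n1; have [k] : exists k, count (predC J) (index_iota 2 n.+1) = k by eexists.
elim: k J b => [|k IH] J b free J1.
  have Jt t : (1 <= t <= n)%N -> J t.
    move=> /andP[]; rewrite leq_eqVlt => /orP[/eqP <- //|t2 tn].
    apply/negPn/negP => nJt; move: free => /eqP; apply/negP; rewrite -lt0n -has_count.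
    by apply/hasP; exists t; rewrite ?mem_index_iota ?t2.
  rewrite (_ : gcyl n J b = cyl n b); last first.
    by rewrite -gcyl_predT; apply/seteqP; split=> x h t ht _; apply: h => //; exact: Jt.
  rewrite hP // /cyl_prob; congr (_%:E); congr (_ * _).
  rewrite big_nat_cond [RHS]big_nat_cond; apply: eq_bigl => t.
  case/boolP: (2 <= t < n.+1)%N => //= /andP[t2 tn].
  by rewrite Jt // (leq_trans _ t2) -ltnS.
have /hasP[s] : has (predC J) (index_iota 2 n.+1) by rewrite has_count free.
rewrite mem_index_iota => /andP[s2 sn] /= nJs.
have sn' : (2 <= s <= n)%N by rewrite s2 -ltnS.
have s1n : (1 <= s <= n)%N by rewrite (leq_trans _ s2) -ltnS.
rewrite (gcyl_split b s1n nJs) measureU ?gcyl_split_disj //; try exact: measurable_gcyl.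
have free' : count (predC (predU J (pred1 s))) (index_iota 2 n.+1) = k.
  move: free; rewrite (count_predC_predU1 _ nJs) count_uniq_mem ?iota_uniq //.
  by rewrite mem_index_iota s2 sn addn1 => -[].
have J1' : predU J (pred1 s) 1%N by rewrite /= J1.
transitivity
  ((2^-1 * \prod_(2 <= t < n.+1 | predU J (pred1 s) t) cyl_weight [eta b with s |-> true] t)%:E +
   (2^-1 * \prod_(2 <= t < n.+1 | predU J (pred1 s) t) cyl_weight [eta b with s |-> false] t)%:E).
  by congr (_ + _); apply: IH.
by rewrite -EFinD !prod_cyl_weight_with //; congr (_%:E); ring.
Qed.

Lemma prob_X1 v : P (X 1 @^-1` [set v]) = (2^-1)%:E.
Proof.
have -> : X 1 @^-1` [set v] = cyl 1 (fun _ => v).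
  by apply/seteqP; split => x /= h; [move=> t; rewrite -eqn_leq => /eqP <-|apply: h].
by rewrite hP // /cyl_prob big_geq ?mulr1.
Qed.

Lemma prob_X1_Xt v t : (2 <= t)%N ->
  P (X 1 @^-1` [set v] `&` X t @^-1` [set true]) = (2^-1 * q v t)%:E.
Proof.
move=> t2; have t1 : (t == 1%N) = false by apply/negbTE; rewrite neq_ltn t2 orbT.
have -> : X 1 @^-1` [set v] `&` X t @^-1` [set true] =
    gcyl t [pred u | (u == 1%N) || (u == t)] [eta (fun=> true) with 1%N |-> v].
  apply/seteqP; split => x /=.
    by move=> [h1 h2] u hu /orP[]/eqP -> /=; rewrite ?t1 ?eqxx.
  move=> h; split; first by rewrite (h 1%N) ?(leq_trans _ t2).
  by rewrite (h t) /= ?t1 ?eqxx ?orbT ?leqnn ?(leq_trans _ t2).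
rewrite prob_gcyl ?(leq_trans _ t2) //; congr (_%:E); congr (_ * _).
rewrite big_mkcond big_nat_recr //= big1_seq ?mul1r.
  by rewrite eqxx orbT /cyl_weight /= t1.
move=> u /=; rewrite mem_index_iota => /andP[u2 ut].
by rewrite ifF //; apply/negbTE; rewrite negb_or !neq_ltn u2 ut orbT.
Qed.

Lemma prob_zeros_after_le v n k : (1 <= n)%N ->
  (P (zeros_after v n) <= (2^-1 * \prod_(n.+1 <= t < (n + k).+1) (1 - q v t))%:E)%E.
Proof.
move=> n1; pose J := [pred u | (u == 1%N) || (n < u)%N].
pose b := [eta (fun=> false) with 1%N |-> v].
have sub : zeros_after v n `<=` gcyl (n + k) J b.
  move=> x [h1 h2] u /andP[u1 _] /orP[/eqP ->|nu] /=; first by [].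
  by rewrite h2 // ifF //; apply/negbTE; rewrite neq_ltn (leq_ltn_trans n1 nu) orbT.
suff <- : \prod_(2 <= t < (n + k).+1 | J t) cyl_weight b t =
          \prod_(n.+1 <= t < (n + k).+1) (1 - q v t).
  rewrite -prob_gcyl ?(leq_trans n1) ?leq_addr //.
  by apply: le_measure sub; rewrite inE; [exact: measurable_zeros_after|exact: measurable_gcyl].
rewrite big_mkcond (big_cat_nat _ (n:=n.+1)) //=; last by rewrite ltnS leq_addr.
rewrite big1_seq ?mul1r; last first.
  move=> u /=; rewrite mem_index_iota => /andP[u2 un].
  by rewrite ifF //; apply/negbTE; rewrite negb_or neq_ltn u2 orbT -leqNgt -ltnS.
apply: eq_big_nat => u /andP[nu _].
have u1 : (u == 1%N) = false by apply/negbTE; rewrite neq_ltn (leq_trans _ nu) ?orbT.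
by rewrite /= u1 nu /cyl_weight /b /= u1.
Qed.

End cylinder_law.

Lemma geometric_half_lt (R : archiRealFieldType) (e : R) : 0 < e -> exists k, 2^-1 ^+ k < e.
Proof.
move=> e0; have /archi_boundP : 0 <= e^-1 by rewrite invr_ge0 ltW.
set k := Num.bound _ => ek.
exists k; rewrite exprVn -invf_plt ?posrE ?exprn_gt0 //.
by apply: lt_le_trans ek _; rewrite -natrX ler_nat ltnW // ltn_expl.
Qed.

Section fair_first_coordinate.
Local Open Scope ereal_scope.
Variables (R : realType) (q : bool -> nat -> R) (P : probability Omega R).
Hypothesis hP : forall n b, (1 <= n)%N -> P (cyl n b) = (cyl_prob q n b)%:E.
Variable a : bool.
Hypothesis q_fair : forall t, q a t = 2^-1%R.

Lemma prob_zeros_after_fair n : (1 <= n)%N -> P (zeros_after a n) = 0.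
Proof.
move=> n1; apply/eqP; rewrite eq_le measure_ge0 andbT.
apply/lee_addgt0Pr => e e0; rewrite add0e.
have [k hk] := geometric_half_lt e0.
apply: le_trans (prob_zeros_after_le hP a k n1) _.
rewrite (eq_bigr (fun=> 2^-1%R)) => [|t _]; last by rewrite q_fair; lra.
rewrite prodr_const_nat subSS addKn lee_fin.
by apply: le_trans (ltW hk); rewrite ler_piMl ?exprn_ge0 // invf_le1 // ler1n.
Qed.

(* Under [P], almost every path with [X 1 = a] lies in [Ainf]. *)
Lemma X1_inter_ge_half (F : set Omega) : measurable F ->
  X 1 @^-1` [set a] `&` Ainf `<=` F -> (2^-1)%:E <= P (X 1 @^-1` [set a] `&` F).
Proof.
move=> mF AF; pose N := \bigcup_n zeros_after a n.+1.
have mN : measurable N by apply: bigcupT_measurable => n; exact: measurable_zeros_after.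
have mXF : measurable (X 1 @^-1` [set a] `&` F : set Omega).
  by apply: measurableI => //; exact: measurable_X.
have N0 : P N = 0.
  apply/eqP; rewrite -measure_le0.
  have mZ n : measurable (zeros_after a n.+1) by exact: measurable_zeros_after.
  apply: le_trans (measure_sigma_subadditive _ mZ mN _) _ => //.
  by rewrite eseries0 // => n _ _; exact: prob_zeros_after_fair.
rewrite -(prob_X1 hP a) -(measureU0 mXF mN N0).
apply: le_measure; rewrite ?inE; [exact: measurable_X|exact: measurableU|].
move=> x Xa; have [Fx|nFx] := pselect (F x); [by left|right].
have [n zn] : exists n, forall t, (n < t)%N -> X t x = false.
  apply: contrapT => nz; apply: nFx; apply: AF; split => // n.
  apply: contrapT => nt; apply: nz; exists n => t nt'.
  by apply/negbTE/negP => Xt; apply: nt; exists t.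
by exists n => //; split => // t nt; apply: zn; exact: ltn_trans nt.
Qed.

Lemma Ainf_sub_ge_half (F : set Omega) : measurable F -> Ainf `<=` F ->
  (2^-1)%:E <= P F.
Proof.
move=> mF AF; apply: le_trans (X1_inter_ge_half mF (fun x Ax => AF x Ax.2)) _.
by apply: le_measure; rewrite ?inE //; apply: measurableI => //; exact: measurable_X.
Qed.

End fair_first_coordinate.

Definition first_one_after n : Omega -> option nat :=
  hitting (fun r => [set x | (n < r)%N /\ X r x]).

Lemma stopping_time_first_one_after n : stopping_time (first_one_after n).
Proof.
apply: stopping_time_hitting => r; apply: Ftime_guard => nr.
by have := @Ftime_X r r true; rewrite leqnn andbT (leq_trans (ltn0Sn n) nr); apply.
Qed.

Lemma Ainf_sub_first_one_after n : Ainf `<=` finite_at (first_one_after n).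
Proof. by rewrite finite_at_hitting => x /(_ n) [t [nt Xt]]; exists t. Qed.

Section geometric_first_coordinate.
Local Open Scope ereal_scope.
Variables (R : realType) (q : bool -> nat -> R) (P : probability Omega R).
Hypothesis hP : forall n b, (1 <= n)%N -> P (cyl n b) = (cyl_prob q n b)%:E.
Variable a : bool.
Hypothesis q_geometric : forall t, q a t = (2 ^- t)%R.

(* Either [X 1 <> a], which has probability 1/2, or [X 1 = a] and some
   [X t] with [t > n] equals 1, which has probability at most
   [sum_(t > n) 2^-1 * 2^-t]. *)
Lemma prob_first_one_after_le n : (1 <= n)%N ->
  P (finite_at (first_one_after n)) <= (2^-1 + 2^-1 ^+ n)%:E.
Proof.
move=> n1.
pose G k : set Omega := X 1 @^-1` [set a] `&` X (k + n.+1) @^-1` [set true].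
have mG k : measurable (G k) by apply: measurableI; apply: measurable_X; rewrite ?addnS.
have mA : measurable (X 1 @^-1` [set ~~ a] : set Omega) by exact: measurable_X.
have mU : measurable (\bigcup_k G k) by exact: bigcupT_measurable.
apply: (@le_trans _ _ (P (X 1 @^-1` [set ~~ a] `|` \bigcup_k G k))).
  apply: le_measure; rewrite ?inE; [|exact: measurableU|].
    by apply: measurable_finite_at; exact: stopping_time_first_one_after.
  rewrite finite_at_hitting => x [t _ [nt Xt]].
  case: (eqVneq (X 1 x) a) => Xa; [right|left].
    by exists (t - n.+1)%N => //; split; rewrite /= ?subnK.
  by move: Xa => /=; case: (X 1 x); case: a.
apply: (le_trans (measureU2 _ mA mU)); rewrite EFinD; apply: leeD.
  by rewrite -(prob_X1 hP (~~ a)).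
apply: (le_trans (measure_sigma_subadditive _ mG mU _)) => //.
have -> : (fun m => \sum_(0 <= k < m) P (G k)) =
    eseries (fun k => (2^-1 / (2 ^ (k + n.+1))%:R)%R%:E).
  apply/funext => m; apply: eq_bigr => k _.
  rewrite (prob_X1_Xt hP) ?q_geometric ?natrX //.
  by rewrite addnS ltnS (leq_trans n1) ?leq_addl.
rewrite (cvg_lim _ (@cvg_geometric_eseries_half R 2^-1 n)) // lee_fin exprVn.
by rewrite ler_piMl ?invr_ge0 ?exprn_ge0 // invf_le1 // ler1n.
Qed.

End geometric_first_coordinate.

Section inverse_capital_measure_of_Ainf.
Local Open Scope ereal_scope.
Variables (R : realType) (Pfam : set (probability Omega R)).

Lemma mu_star_Ainf_le_half :
  (forall P, Pfam P -> forall n, (1 <= n)%N ->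
     P (finite_at (first_one_after n)) <= (2^-1 + 2^-1 ^+ n)%:E) ->
  mu_star Pfam Ainf <= (2^-1)%:E.
Proof.
move=> hP; apply/lee_addgt0Pr => e e0; have [k hk] := geometric_half_lt e0.
apply: (@le_trans _ _ (ereal_sup
    [set y | exists2 P, Pfam P & y = P (finite_at (first_one_after k.+1))])).
  apply: ereal_inf_lbound; exists (first_one_after k.+1); split.
    exact: stopping_time_first_one_after.
  by split=> //; exact: Ainf_sub_first_one_after.
apply: ge_ereal_sup => _ [P PP ->]; apply: le_trans (hP P PP k.+1 isT) _.
rewrite -EFinD lee_fin lerD2l; apply/ltW/le_lt_trans/hk.
by apply: ler_wiXn2l => //; lra.
Qed.

Lemma mu_star_Ainf_ge_half P : Pfam P ->
  (forall F, measurable F -> Ainf `<=` F -> (2^-1)%:E <= P F) ->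
  (2^-1)%:E <= mu_star Pfam Ainf.
Proof.
move=> PP hF; apply: le_ereal_inf_tmp => _ [tau [st [sub ->]]].
apply: le_trans (hF _ (measurable_finite_at st) sub) _.
by apply: ereal_sup_ubound; exists P.
Qed.

End inverse_capital_measure_of_Ainf.

(** * Stopped e-processes *)

Section integral_lower_bound.
Local Open Scope ereal_scope.
Import HBNNSimple.

Lemma integral_ge_indic_comb d (T : measurableType d) (R : realType)
    (mu : {measure set T -> \bar R}) (f : T -> \bar R) (B C : set T) (k l : R) :
  measurable B -> measurable C -> (0 <= k)%R -> (0 <= l)%R -> (forall x, 0 <= f x) ->
  (forall x, (k * \1_B x + l * \1_C x)%:E <= f x) ->
  k%:E * mu B + l%:E * mu C <= \int[mu]_x f x.
Proof.
move=> mB mC k0 l0 f0 hf.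
pose h := add_nnsfun (scale_nnsfun (indic_nnsfun R mB) k0) (scale_nnsfun (indic_nnsfun R mC) l0).
have <- : sintegral mu h = k%:E * mu B + l%:E * mu C.
  by rewrite sintegralD !sintegralrM !sintegral_indic.
by rewrite ge0_integralTE //; apply: ereal_sup_ubound; exists h.
Qed.

End integral_lower_bound.

Lemma limn_esup_ge0 (R : realType) (u : (\bar R)^nat) :
  (forall n, (0 <= u n)%E) -> (0 <= limn_esup u)%E.
Proof.
move=> u0; rewrite limn_esup_lim; apply: lime_ge; first exact: is_cvg_esups.
apply: nearW => n; apply: le_trans (u0 n) _.
by apply: ereal_sup_ubound; exists n => /=.
Qed.

Lemma stopped_ge0 (R : realType) (E : nat -> Omega -> \bar R) tau x :
  (forall t x, (0 <= E t x)%E) -> (0 <= stopped E tau x)%E.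
Proof. by move=> E0; rewrite /stopped; case: (tau x) => //; exact: limn_esup_ge0. Qed.

Section e_process_under_fair_branch.
Local Open Scope ereal_scope.
Variables (R : realType) (q : bool -> nat -> R) (P : probability Omega R).
Hypothesis hP : forall n b, (1 <= n)%N -> P (cyl n b) = (cyl_prob q n b)%:E.
Variable a : bool.
Hypothesis q_fair : forall t, q a t = 2^-1%R.
Hypothesis q_other_gt0 : forall t, (0 < q (~~ a) t)%R.
Variable E : nat -> Omega -> \bar R.
Hypothesis E_ge0 : forall t x, 0 <= E t x.
Hypothesis E_adapted : forall t (B : set (\bar R)), measurable B -> Ftime t (E t @^-1` B).
Hypothesis E_stopped_le1 : forall tau, stopping_time tau -> \int[P]_x stopped E tau x <= 1.

Lemma E_agree t x y : agree_upto t x y -> E t x = E t y.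
Proof.
move=> xy; have := @E_adapted t _ (emeasurable_set1 (E t x)).
by move=> /Ftime_agree /(_ xy erefl) ->.
Qed.

Lemma E0_le1 x : E 0 x <= 1.
Proof.
have := E_stopped_le1 (stopping_time_cst 0); rewrite /stopped.
have -> : (fun y => E 0 y) = cst (E 0 x).
  by apply/funext => y; apply: E_agree => s /andP[s1 s0]; move: (leq_trans s1 s0).
by rewrite integral_cst // [X in _ * X](_ : _ = 1) ?mule1 //; exact: probability_setT.
Qed.

(* [X 1 = ~~ a] and [X t = true] for [t >= 2], since [X t x = x t.-1]. *)
Definition flip_then_ones : Omega := fun i => if i == 0%N then ~~ a else true.

Lemma Ainf_flip_then_ones : Ainf flip_then_ones.
Proof. by move=> n; exists n.+2. Qed.

Lemma cyl_prob_flip_then_ones_gt0 t : (0 < cyl_prob q t (X^~ flip_then_ones))%R.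
Proof.
rewrite /cyl_prob mulr_gt0 // big_seq; apply: prodr_gt0 => s.
rewrite mem_index_iota => /andP[s2 _].
have -> : X s flip_then_ones = true by rewrite /X /flip_then_ones; case: s s2 => // -[].
exact: q_other_gt0.
Qed.

(* Time 0 is excluded because [reach_time] is only used on [X 1 = a], an
   event outside [Ftime 0]. *)
Definition reach_time (ce : R) : Omega -> option nat :=
  hitting (fun r => [set x | (0 < r)%N /\ ce%:E <= E r x]).

Lemma stopping_time_reach_time ce : stopping_time (reach_time ce).
Proof.
apply: stopping_time_hitting => r; apply: Ftime_guard => _.
rewrite (_ : (fun x : Omega => (ce%:E <= E r x : Prop)) =
             E r @^-1` `[ce%:E, +oo[%classic); last first.
  by apply/seteqP; split=> x /=; rewrite in_itv /= andbT.
by apply: E_adapted; exact: emeasurable_itv.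
Qed.

Definition threshold_time (ce : R) t (x : Omega) : option nat :=
  if X 1 x == a then reach_time ce x else Some t.

Lemma stopping_time_threshold_time ce t : (1 <= t)%N ->
  stopping_time (threshold_time ce t).
Proof.
move=> t1; apply: (@stopping_time_if 1).
- rewrite (_ : [set x | X 1 x == a] = X 1 @^-1` [set a]); first exact: Ftime_X.
  by apply/seteqP; split=> x /eqP.
- exact: stopping_time_reach_time.
- exact: stopping_time_cst.
- by move=> x s /hitting_Some [].
- by move=> x s [<-].
Qed.

Lemma X1_reach_ge_half ce : (1 < ce)%R ->
  (forall x, Ainf x -> ce%:E < ereal_sup (range (E^~ x))) ->
  (2^-1)%:E <= P (X 1 @^-1` [set a] `&` finite_at (reach_time ce)).
Proof.
move=> ce1 hsup; apply: (X1_inter_ge_half hP q_fair).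
  by apply: measurable_finite_at; exact: stopping_time_reach_time.
move=> x [_ Ax]; rewrite finite_at_hitting.
have /ereal_sup_gt [_ [r _ <-] ceE] := hsup x Ax.
exists r => //; split; last exact: ltW.
rewrite lt0n; apply: contraTneq ceE => ->; rewrite -leNgt.
by apply: le_trans (E0_le1 x) _; rewrite lee_fin ltW.
Qed.

Lemma threshold_time_bound (ce d : R) t : (1 <= t)%N -> (1 < ce)%R -> (0 <= d)%R ->
  d%:E <= E t flip_then_ones ->
  (forall x, Ainf x -> ce%:E < ereal_sup (range (E^~ x))) ->
  (ce * 2^-1 + d * cyl_prob q t (X^~ flip_then_ones) <= 1)%R.
Proof.
move=> t1 ce1 d0 dE hsup.
pose B : set Omega := X 1 @^-1` [set a] `&` finite_at (reach_time ce).
pose C := cyl t (X^~ flip_then_ones).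
have mB : measurable B.
  apply: measurableI; first exact: measurable_X.
  by apply: measurable_finite_at; exact: stopping_time_reach_time.
have mC : measurable C by rewrite /C -gcyl_predT; exact: measurable_gcyl.
have lower x : (ce * \1_B x + d * \1_C x)%:E <= stopped E (threshold_time ce t) x.
  rewrite !indicE; have [[Xa fx]|nBx] := pselect (B x).
    have nCx : ~ C x.
      move=> Cx; have := Cx 1%N t1.
      by rewrite (Xa : X 1 x = a) /X /flip_then_ones /=; case: a {Xa}.
    rewrite (mem_set (conj Xa fx : B x)) (memNset nCx) mulr1 mulr0 addr0.
    rewrite /stopped /threshold_time (Xa : X 1 x = a) eqxx; move: fx; rewrite /finite_at /=.
    by case hx: (reach_time ce x) => [m|//] _; move: hx => /hitting_Some [].
  rewrite (memNset nBx) mulr0 add0r.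
  have [Cx|nCx] := pselect (C x); last by rewrite (memNset nCx) mulr0; exact: stopped_ge0.
  rewrite (mem_set Cx) mulr1 /stopped /threshold_time (_ : X 1 x == a = false); last first.
    by have := Cx 1%N t1; rewrite /X /flip_then_ones /= => ->; case: a.
  by rewrite (E_agree (y := flip_then_ones) Cx).
rewrite -lee_fin; apply: le_trans (E_stopped_le1 (stopping_time_threshold_time ce t1)).
have ce0 : (0 <= ce)%R by apply: ltW; exact: lt_trans ltr01 ce1.
have stopped0 x : 0 <= stopped E (threshold_time ce t) x by exact: stopped_ge0.
apply: le_trans (integral_ge_indic_comb P mB mC ce0 d0 stopped0 lower).
rewrite EFinD (EFinM ce) (EFinM d); apply: leeD; apply: lee_wpmul2l; rewrite ?lee_fin //.
  exact: X1_reach_ge_half.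
by rewrite -(hP (X^~ flip_then_ones) t1); exact: lexx.
Qed.

Lemma Ainf_sup_ge_lt2 (c : R) :
  (forall x, Ainf x -> c%:E <= ereal_sup (range (E^~ x))) -> (c < 2)%R.
Proof.
move=> hc; rewrite ltNge; apply/negP => c2.
have /ereal_sup_gt [_ [t _ <-] Et] : 1 < ereal_sup (range (E^~ flip_then_ones)).
  by apply: lt_le_trans (hc _ Ainf_flip_then_ones); rewrite lte_fin; lra.
have t1 : (1 <= t)%N by rewrite lt0n; apply: contraTneq Et => ->; rewrite -leNgt E0_le1.
have p0 := cyl_prob_flip_then_ones_gt0 t.
set p := cyl_prob _ _ _ in p0 *.
pose eps := Num.min p 2^-1%R.
have eps_p : (eps <= p)%R by rewrite ge_min lexx.
have eps_half : (eps <= 2^-1)%R by rewrite ge_min lexx orbT.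
have eps0 : (0 < eps)%R by rewrite lt_min p0 invr_gt0 ltr0n.
have := @threshold_time_bound (c - eps) 1 t t1 _ ler01 (ltW Et).
rewrite -/p mul1r => /(_ _ _) bound.
have : ((c - eps) * 2^-1 + p <= 1)%R.
  apply: bound; first lra.
  by move=> x Ax; apply: lt_le_trans (hc x Ax); rewrite lte_fin; lra.
lra.
Qed.

End e_process_under_fair_branch.

Theorem mainTheorem10 (R : realType) (P1 P2 : probability Omega R) :
  (forall n b, (1 <= n)%N -> P1 (cyl n b) = (cyl_prob q1 n b)%:E) ->
  (forall n b, (1 <= n)%N -> P2 (cyl n b) = (cyl_prob q2 n b)%:E) ->
  let Pfam := [set P | P = P1 \/ P = P2] in
  mu_star Pfam Ainf = (2^-1)%:E /\
  (forall (E : nat -> Omega -> \bar R) (c : R),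
     e_process Pfam E -> 1 <= c ->
     (forall x, Ainf x -> (c%:E <= ereal_sup (range (fun t => E t x)))%E) ->
     c < 2).
Proof.
move=> h1 h2 Pfam.
have q1_fair t : q1 true t = 2^-1 :> R by [].
have q1_other_gt0 t : 0 < q1 (~~ true) t :> R by rewrite invr_gt0 exprn_gt0.
split.
  apply/eqP; rewrite eq_le; apply/andP; split.
    apply: mu_star_Ainf_le_half => _ [->|->] n n1.
      exact: (@prob_first_one_after_le _ _ _ h1 false).
    exact: (@prob_first_one_after_le _ _ _ h2 true).
  apply: (@mu_star_Ainf_ge_half _ _ P1); first by left.
  by move=> F mF AF; apply: (Ainf_sub_ge_half h1 q1_fair mF AF).
move=> E c [E_ge0 E_adapted E_le1] _.
by apply: (Ainf_sup_ge_lt2 h1 q1_fair q1_other_gt0 E_ge0 E_adapted); apply: E_le1; left.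
Qed.
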